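(* Let $K=\{p\in\mathbb{R}^3:0\le p_3\le\theta(p_1,p_2)\}$ and, for $p^{pr}\in K$, let $N_K(p^{pr})=\{z\in\mathbb{R}^3:\langle z,q-p^{pr}\rangle\le0\ \forall q\in K\}$ be the normal cone. Then: (i) if $p^{pr}\in\{(p_1,p_2,p_3):0<p_3<\theta(p_1,p_2)\}$, then $N_K(p^{pr})=\{0\}$; (ii) if $p^{pr}\in(0,\infty)\times(0,\infty)\times\{0\}$, then $N_K(p^{pr})=\{0\}\times\{0\}\times(-\infty,0]$; (iii) if $p^{pr}=(p^{pr}_1,0,0)$ with $p^{pr}_1>0$, then $N_K(p^{pr})=\{0\}\times(-\infty,0]\times(-\infty,0]\ \cup\ \{(0,q_2,q_3)\in\{0\}\times(-\infty,0]\times(0,\infty):(0,-q_2/q_3)\in\partial^+\theta(p^{pr}_1,0)\}$; moreover $(0,q)\in\partial^+\theta(p^{pr}_1,0)$ is equivalent to $q\ge\lim_{z\searrow0}\partial_2\theta(p^{pr}_1,z)$, and $\partial^+\theta(p^{pr}_1,0)$ is empty if this limit equals $+\infty$; the analogous representation holds for $p^{pr}=(0,p^{pr}_2,0)$ with $p^{pr}_2>0$; (iv) if $p^{pr}=(0,0,0)$, then $N_K(p^{pr})=(-\infty,0]^3\cup\{(q_1,q_2,q_3)\in(-\infty,0]\times(-\infty,0]\times(0,\infty):(q_1/q_3,q_2/q_3)\in-\partial^+\theta(0)\}$; (v) if $p^{pr}=(p^{pr}_1,p^{pr}_2,\theta(p^{pr}_1,p^{pr}_2))$ with $(p^{pr}_1,p^{pr}_2)\in(0,\infty)^2$,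 then $N_K(p^{pr})=\{\lambda(-\partial_1\theta(p^{pr}_1,p^{pr}_2),-\partial_2\theta(p^{pr}_1,p^{pr}_2),1):\lambda>0\}$.
   Context: $\theta:[0,\infty)^2\to[0,\infty)$ is continuous, concave, 1-homogeneous, symmetric, $C^\infty$ on $(0,\infty)^2$, with $\theta(0,s)=\theta(s,0)=0$, $\theta(s,s)=s$, $\theta(s,t)>0$ for $s,t>0$, and nondecreasing in each argument; it is regarded as a concave function $\mathbb{R}^2\to\mathbb{R}\cup\{-\infty\}$ by setting $\theta(s,t)=-\infty$ if $\min\{s,t\}<0$. The super-differential of $\theta$ at $x\in\mathbb{R}^2$ is $\partial^+\theta(x)=-\partial(-\theta)(x)$, where $\partial(-\theta)(x)$ is the convex subdifferential of $-\theta$ at $x$; equivalently $\partial^+\theta(x)=\{r\in\mathbb{R}^2:\theta(y)\le\theta(x)+\langle r,y-x\rangle\ \forall y\in\mathbb{R}^2\}$. *)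

From Stdlib Require Import Reals Lra List.
From Coquelicot Require Import Coquelicot.
Open Scope R_scope.

Definition quad (x : R * R) : Prop := 0 <= fst x /\ 0 <= snd x.

Definition part (b : bool) (f : R -> R -> R) : R -> R -> R :=
  fun s t => if b then Derive (fun u => f u t) s else Derive (fun u => f s u) t.

Fixpoint pder (ds : list bool) (f : R -> R -> R) : R -> R -> R :=
  match ds with
  | nil => f
  | b :: ds' => part b (pder ds' f)
  end.

(* C^oo on the open quadrant (0,oo)^2: all iterated partial derivatives
   exist and are (jointly) continuous there *)
Definition smooth_pos (f : R -> R -> R) : Prop :=
  forall ds : list bool, forall s t, 0 < s -> 0 < t ->
    continuous (fun x : R * R => pder ds f (fst x) (snd x)) (s, t) /\
    ex_derive (fun u => pder ds f u t) s /\
    ex_derive (fun u => pder ds f s u) t.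

Definition theta_hyp (th : R -> R -> R) : Prop :=
  (forall s t, 0 <= s -> 0 <= t ->
     filterlim (fun x : R * R => th (fst x) (snd x))
               (within quad (locally (s, t))) (locally (th s t))) /\
  (forall s t, 0 <= s -> 0 <= t -> 0 <= th s t) /\
  (forall s1 t1 s2 t2 l, 0 <= s1 -> 0 <= t1 -> 0 <= s2 -> 0 <= t2 ->
     0 <= l <= 1 ->
     l * th s1 t1 + (1 - l) * th s2 t2
       <= th (l * s1 + (1 - l) * s2) (l * t1 + (1 - l) * t2)) /\
  (forall l s t, 0 <= l -> 0 <= s -> 0 <= t -> th (l * s) (l * t) = l * th s t) /\
  (forall s t, 0 <= s -> 0 <= t -> th s t = th t s) /\
  smooth_pos th /\
  (forall s, 0 <= s -> th 0 s = 0 /\ th s 0 = 0) /\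
  (forall s, 0 <= s -> th s s = s) /\
  (forall s t, 0 < s -> 0 < t -> 0 < th s t) /\
  (forall s s' t, 0 <= s -> s <= s' -> 0 <= t -> th s t <= th s' t) /\
  (forall s t t', 0 <= s -> 0 <= t -> t <= t' -> th s t <= th s t').

Definition theta_ext (th : R -> R -> R) (y1 y2 : R) : Rbar :=
  if Rle_dec 0 y1 then (if Rle_dec 0 y2 then Finite (th y1 y2) else m_infty)
  else m_infty.

Definition superdiff (th : R -> R -> R) (x1 x2 r1 r2 : R) : Prop :=
  forall y1 y2 : R,
    Rbar_le (theta_ext th y1 y2)
            (Rbar_plus (theta_ext th x1 x2)
                       (Finite (r1 * (y1 - x1) + r2 * (y2 - x2)))).

(* K = { p in R^3 : 0 <= p3 <= theta(p1,p2) } (theta = -oo off the quadrant) *)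
Definition Kset (th : R -> R -> R) (p1 p2 p3 : R) : Prop :=
  0 <= p1 /\ 0 <= p2 /\ 0 <= p3 /\ p3 <= th p1 p2.

Definition normal_cone (th : R -> R -> R) (p1 p2 p3 z1 z2 z3 : R) : Prop :=
  forall q1 q2 q3, Kset th q1 q2 q3 ->
    z1 * (q1 - p1) + z2 * (q2 - p2) + z3 * (q3 - p3) <= 0.

Definition pd1 (th : R -> R -> R) (s t : R) : R := Derive (fun u => th u t) s.
Definition pd2 (th : R -> R -> R) (s t : R) : R := Derive (fun u => th s u) t.

From Stdlib Require Import Reals Lra List.
From Coquelicot Require Import Coquelicot.
Open Scope R_scope.

(* For z3 > 0 the normal-cone inequality is sharpest on the graph q3 = theta(q1,q2), and
   dividing by z3 turns it into the super-differential inequality for (-z1/z3, -z2/z3);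
   for z3 <= 0 it is sharpest on the base q3 = 0 and reduces to the normal cone of the
   quadrant.  At interior points the super-differential of the concave function theta is
   its gradient: concavity plus the one-variable tangent inequalities give the tangent
   plane, and a supergradient must be a critical point of theta minus the plane.  On the
   edge (p1,0), homogeneity reduces a supergradient (0,q) to the bound theta(p1,z) <= q z,
   which for the concave function theta(p1,.) holds exactly when q dominates its
   antitone derivative on (0,oo), i.e. its right limit at 0.  The edge (0,p2) follows by
   exchanging the two variables. *)

Lemma ball_R (x e y : R) : ball x e y <-> Rabs (y - x) < e.
Proof. reflexivity. Qed.

Lemma le_lim_at_right (f : R -> R) (a l d : R) : 0 < d ->
  (forall t, 0 < t < d -> a <= f t) ->
  filterlim f (at_right 0) (locally l) -> a <= l.
Proof.
  intros Hd Hf Hl.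
  apply (filterlim_le (FF := Proper_StrongProper _ (at_right_proper_filter 0))
           (fun _ => a) f a l); [| apply filterlim_const | exact Hl].
  exists (mkposreal d Hd). intros t Ht Ht0. apply Hf.
  rewrite ball_R in Ht. rewrite Rminus_0_r, Rabs_pos_eq in Ht by lra. simpl in Ht. lra.
Qed.

Lemma is_derive_quotient_at_right (f : R -> R) (x l : R) : is_derive f x l ->
  filterlim (fun h => (f (x + h) - f x) / h) (at_right 0) (locally l).
Proof.
  intros Hd. apply is_derive_Reals in Hd.
  apply filterlim_locally. intros eps.
  destruct (Hd eps (cond_pos eps)) as [delta Hdelta].
  exists delta. intros h Hh Hh0. apply ball_R.
  apply Hdelta; [lra|]. rewrite ball_R in Hh. rewrite Rminus_0_r in Hh. exact Hh.
Qed.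

Lemma Derive_eq_of_le_affine (g : R -> R) (a c r : R) : 0 < r -> ex_derive g a ->
  (forall x, a - r < x < a + r -> g x <= g a + c * (x - a)) -> Derive g a = c.
Proof.
  intros Hr Hd Hle.
  set (f := fun x => g x - c * (x - a)).
  assert (Hf : is_derive f a (Derive g a - c)).
  { unfold f. auto_derive; [exact Hd |].
    change (Derive (fun x => g x) a) with (Derive g a). ring. }
  assert (Hmax := deriv_maximum f (a - r) (a + r) a (ex_derive_Reals_0 f a (ex_intro _ _ Hf))).
  rewrite Derive_Reals, (is_derive_unique _ _ _ Hf) in Hmax.
  enough (Derive g a - c = 0) by lra.
  apply Hmax; [lra | lra |]. intros x Hx1 Hx2. unfold f. specialize (Hle x (conj Hx1 Hx2)). lra.
Qed.

Definition sup_pos (f : R -> R) : Rbar := Lub_Rbar (fun y => exists z, 0 < z /\ y = f z).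

Lemma antitone_lim_at_right0 (f : R -> R) : (forall a b, 0 < a <= b -> f b <= f a) ->
  filterlim f (at_right 0) (Rbar_locally (sup_pos f)).
Proof.
  intros Hanti. unfold sup_pos.
  destruct (Lub_Rbar_correct (fun y => exists z, 0 < z /\ y = f z)) as [Hub Hlub].
  set (L := Lub_Rbar _) in *.
  assert (Hf_le : forall z, 0 < z -> Rbar_le (f z) L) by (intros z Hz; apply Hub; exists z; auto).
  assert (Happrox : forall M : R, Rbar_lt M L -> exists z0, 0 < z0 /\ M < f z0).
  { intros M HM. apply Classical_Prop.NNPP. intro Hn.
    enough (Rbar_le L M) by (apply (Rbar_le_not_lt _ _ H HM)).
    apply Hlub. intros y [z [Hz ->]]. simpl. apply Rnot_lt_le. intro. apply Hn. eauto. }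
  assert (Hnear : forall z0, 0 < z0 -> at_right 0 (fun x => f z0 <= f x /\ Rbar_le (f x) L)).
  { intros z0 Hz0. exists (mkposreal z0 Hz0). intros x Hx Hx0.
    rewrite ball_R in Hx. rewrite Rminus_0_r, Rabs_pos_eq in Hx by lra. simpl in Hx.
    split; [apply Hanti; lra | apply Hf_le; exact Hx0]. }
  destruct L as [l | | ] eqn:HL.
  - apply filterlim_locally. intros eps.
    destruct (Happrox (l - eps)) as [z0 [Hz0 Hlt]]; [simpl; pose proof (cond_pos eps); lra|].
    eapply filter_imp; [| exact (Hnear z0 Hz0)]. intros x [H1 H2]. simpl in H2.
    apply ball_R, Rabs_def1; lra.
  - intros P [M HM].
    destruct (Happrox M) as [z0 [Hz0 Hlt]]; [exact I|].
    refine (filter_imp _ _ _ (Hnear z0 Hz0)). intros x [H1 _]. apply HM. lra.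
  - destruct (Hf_le 1 Rlt_0_1).
Qed.

Definition concave_on_nonneg (g : R -> R) : Prop :=
  forall x y l, 0 <= x -> 0 <= y -> 0 <= l <= 1 ->
    l * g x + (1 - l) * g y <= g (l * x + (1 - l) * y).

Section ConcaveOnNonneg.
Variable g : R -> R.
Hypothesis g_concave : concave_on_nonneg g.

Lemma concave_le_tangent (a b : R) : 0 < a -> 0 <= b -> ex_derive g a ->
  g b <= g a + Derive g a * (b - a).
Proof.
  intros Ha Hb Hd.
  assert (Hchord : is_derive (fun t => g (a + t * (b - a))) 0 (Derive g a * (b - a))).
  { auto_derive; rewrite Rmult_0_l, Rplus_0_r; [exact Hd |].
    change (Derive (fun x => g x) a) with (Derive g a). ring. }
  enough (g b - g a <= Derive g a * (b - a)) by lra.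
  refine (le_lim_at_right _ _ _ 1 Rlt_0_1 _ (is_derive_quotient_at_right _ _ _ Hchord)).
  intros t Ht. simpl.
  replace (a + (0 + t) * (b - a)) with (t * b + (1 - t) * a) by ring.
  replace (a + 0 * (b - a)) with a by ring.
  assert (Hc := g_concave b a t Hb (Rlt_le _ _ Ha) ltac:(lra)).
  apply Rmult_le_reg_r with t; [lra|].
  unfold Rdiv. rewrite Rmult_assoc, Rinv_l by lra. lra.
Qed.

Lemma concave_Derive_antitone (a b : R) : 0 < a <= b -> ex_derive g a -> ex_derive g b ->
  Derive g b <= Derive g a.
Proof.
  intros Hab Ha Hb.
  destruct (Req_dec a b) as [->|Hne]; [lra|].
  pose proof (concave_le_tangent a b ltac:(lra) ltac:(lra) Ha).
  pose proof (concave_le_tangent b a ltac:(lra) ltac:(lra) Hb).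
  nra.
Qed.

Hypothesis g_derivable : forall z, 0 < z -> ex_derive g z.

Lemma concave_Derive_lim_at_right0 :
  filterlim (Derive g) (at_right 0) (Rbar_locally (sup_pos (Derive g))).
Proof.
  apply antitone_lim_at_right0. intros a b Hab.
  apply concave_Derive_antitone; [exact Hab | apply g_derivable; lra ..].
Qed.

Lemma concave_le_linear_iff (q : R) : g 0 = 0 -> filterlim g (at_right 0) (locally 0) ->
  (forall z, 0 <= z -> g z <= q * z) <-> Rbar_le (sup_pos (Derive g)) q.
Proof.
  intros Hg0 Hcont. unfold sup_pos.
  destruct (Lub_Rbar_correct (fun y => exists z, 0 < z /\ y = Derive g z)) as [Hub Hlub].
  split.
  - intros Hq. apply Hlub. intros y [z [Hz ->]]. simpl.
    pose proof (concave_le_tangent z 0 Hz (Rle_refl 0) (g_derivable z Hz)).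
    pose proof (Hq z (Rlt_le _ _ Hz)). nra.
  - intros HL z Hz.
    destruct (Req_dec z 0) as [->|Hz0]; [rewrite Hg0; lra|].
    assert (Hsecant : forall e, 0 < e < z -> g z <= g e + q * (z - e)).
    { intros e He.
      assert (Hde : Derive g e <= q).
      { change (Rbar_le (Derive g e) q). apply Rbar_le_trans with (2 := HL).
        apply Hub. exists e. split; [lra | reflexivity]. }
      pose proof (concave_le_tangent e z ltac:(lra) Hz (g_derivable e ltac:(lra))).
      nra. }
    assert (Hlim : filterlim (fun e => g e + q * (z - e)) (at_right 0) (locally (0 + q * (z - 0)))).
    { assert (Haffine : filterlim (fun e => q * (z - e)) (at_right 0) (locally (q * (z - 0)))).
      { apply (filterlim_filter_le_1 _ (filter_le_within _)).
        apply (continuity_pt_filterlim (fun e => q * (z - e))). reg. }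
      exact (filterlim_comp_2 _ _ Rplus Hcont Haffine (filterlim_plus 0 (q * (z - 0)))). }
    pose proof (le_lim_at_right _ _ _ z ltac:(lra) Hsecant Hlim). lra.
Qed.

End ConcaveOnNonneg.

Lemma opp_div_ge0_nonpos (z c : R) : 0 < c -> 0 <= - (z / c) -> z <= 0.
Proof.
  intros Hc H. replace z with (- (- (z / c)) * c) by (field; lra). nra.
Qed.

Section NormalCone.
Variable th : R -> R -> R.
Hypothesis th_nonneg : forall s t, 0 <= s -> 0 <= t -> 0 <= th s t.
Hypothesis th_axis1 : forall s, 0 <= s -> th s 0 = 0.
Hypothesis th_axis2 : forall t, 0 <= t -> th 0 t = 0.
Hypothesis th_homogeneous :
  forall l s t, 0 <= l -> 0 <= s -> 0 <= t -> th (l * s) (l * t) = l * th s t.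
Hypothesis th_concave2 : forall s, 0 <= s -> concave_on_nonneg (th s).
Hypothesis th_derivable2 : forall s t, 0 < s -> 0 < t -> ex_derive (th s) t.
Hypothesis th_right_cont2 : forall s, 0 <= s -> filterlim (th s) (at_right 0) (locally 0).

Lemma superdiffE (x1 x2 r1 r2 : R) : 0 <= x1 -> 0 <= x2 ->
  superdiff th x1 x2 r1 r2 <->
  forall y1 y2, 0 <= y1 -> 0 <= y2 ->
    th y1 y2 <= th x1 x2 + (r1 * (y1 - x1) + r2 * (y2 - x2)).
Proof.
  intros Hx1 Hx2. unfold superdiff, theta_ext.
  destruct (Rle_dec 0 x1) as [_|]; [|lra]. destruct (Rle_dec 0 x2) as [_|]; [|lra].
  split.
  - intros H y1 y2 Hy1 Hy2. specialize (H y1 y2).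
    destruct (Rle_dec 0 y1); [|lra]. destruct (Rle_dec 0 y2); [|lra]. exact H.
  - intros H y1 y2.
    destruct (Rle_dec 0 y1); [|exact I]. destruct (Rle_dec 0 y2); [|exact I].
    apply H; assumption.
Qed.

Lemma superdiff_ge0 (x1 x2 r1 r2 : R) : 0 <= x1 -> 0 <= x2 -> th x1 x2 = 0 ->
  superdiff th x1 x2 r1 r2 -> 0 <= r1 /\ 0 <= r2.
Proof.
  intros Hx1 Hx2 Hx0 Hs. rewrite superdiffE, Hx0 in Hs by assumption.
  pose proof (Hs (x1 + 1) x2 ltac:(lra) Hx2). pose proof (th_nonneg (x1 + 1) x2 ltac:(lra) Hx2).
  pose proof (Hs x1 (x2 + 1) Hx1 ltac:(lra)). pose proof (th_nonneg x1 (x2 + 1) Hx1 ltac:(lra)).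
  split; nra.
Qed.

Lemma superdiff_axis1 (p1 r1 r2 : R) : 0 < p1 -> superdiff th p1 0 r1 r2 -> r1 = 0 /\ 0 <= r2.
Proof.
  intros Hp1 Hs.
  destruct (superdiff_ge0 p1 0 r1 r2 ltac:(lra) (Rle_refl 0) (th_axis1 p1 ltac:(lra)) Hs).
  rewrite superdiffE, th_axis1 in Hs by lra.
  pose proof (Hs 0 0 (Rle_refl 0) (Rle_refl 0)). rewrite th_axis1 in * by lra.
  split; nra.
Qed.

Lemma quadrant_normal_coneE (p1 p2 z1 z2 : R) : 0 <= p1 -> 0 <= p2 ->
  (forall q1 q2, 0 <= q1 -> 0 <= q2 -> z1 * (q1 - p1) + z2 * (q2 - p2) <= 0) <->
  (z1 <= 0 /\ z2 <= 0 /\ z1 * p1 = 0 /\ z2 * p2 = 0).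
Proof.
  intros Hp1 Hp2. split.
  - intros H.
    pose proof (H (p1 + 1) p2 ltac:(lra) Hp2). pose proof (H p1 (p2 + 1) Hp1 ltac:(lra)).
    pose proof (H 0 p2 (Rle_refl 0) Hp2). pose proof (H p1 0 Hp1 (Rle_refl 0)).
    repeat split; nra.
  - intros (H1 & H2 & H3 & H4) q1 q2 Hq1 Hq2. nra.
Qed.

Lemma normal_cone_z3_nonposE (p1 p2 p3 z1 z2 z3 : R) : z3 <= 0 ->
  normal_cone th p1 p2 p3 z1 z2 z3 <->
  forall q1 q2, 0 <= q1 -> 0 <= q2 -> z1 * (q1 - p1) + z2 * (q2 - p2) <= z3 * p3.
Proof.
  intros Hz3. split.
  - intros Hn q1 q2 Hq1 Hq2.
    pose proof (Hn q1 q2 0 (conj Hq1 (conj Hq2 (conj (Rle_refl 0) (th_nonneg q1 q2 Hq1 Hq2))))).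
    lra.
  - intros H q1 q2 q3 (Hq1 & Hq2 & Hq3 & _). pose proof (H q1 q2 Hq1 Hq2). nra.
Qed.

Lemma normal_cone_z3_posE (p1 p2 z1 z2 z3 : R) : 0 <= p1 -> 0 <= p2 -> 0 < z3 ->
  normal_cone th p1 p2 (th p1 p2) z1 z2 z3 <->
  superdiff th p1 p2 (- (z1 / z3)) (- (z2 / z3)).
Proof.
  intros Hp1 Hp2 Hz3. rewrite superdiffE by assumption.
  assert (Hscale : forall y1 y2 t,
    t <= th p1 p2 + (- (z1 / z3) * (y1 - p1) + - (z2 / z3) * (y2 - p2)) <->
    z1 * (y1 - p1) + z2 * (y2 - p2) + z3 * (t - th p1 p2) <= 0).
  { intros y1 y2 t.
    set (B := z1 * (y1 - p1) + z2 * (y2 - p2)).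
    replace (th p1 p2 + (- (z1 / z3) * (y1 - p1) + - (z2 / z3) * (y2 - p2)))
      with (th p1 p2 - B / z3) by (unfold B; field; lra).
    assert (HB : z3 * (th p1 p2 - B / z3) = z3 * th p1 p2 - B) by (field; lra).
    split; intro H.
    - apply (Rmult_le_compat_l z3) in H; lra.
    - apply (Rmult_le_reg_l z3); lra. }
  split.
  - intros Hn y1 y2 Hy1 Hy2. apply Hscale.
    apply Hn. repeat split; try assumption; [apply th_nonneg; assumption | apply Rle_refl].
  - intros Hs q1 q2 q3 (Hq1 & Hq2 & Hq3 & Hq). apply (Hscale q1 q2 q3).
    pose proof (Hs q1 q2 Hq1 Hq2). lra.
Qed.

Lemma normal_cone_z3_le0 (p1 p2 p3 z1 z2 z3 : R) : 0 <= p1 -> 0 <= p2 ->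
  p3 < th p1 p2 -> normal_cone th p1 p2 p3 z1 z2 z3 -> z3 <= 0.
Proof.
  intros Hp1 Hp2 Hp3 Hn.
  pose proof (Hn p1 p2 (th p1 p2)
    (conj Hp1 (conj Hp2 (conj (th_nonneg p1 p2 Hp1 Hp2) (Rle_refl _))))).
  nra.
Qed.

Lemma normal_cone_z3_ge0 (p1 p2 p3 z1 z2 z3 : R) : 0 <= p1 -> 0 <= p2 ->
  0 < p3 -> normal_cone th p1 p2 p3 z1 z2 z3 -> 0 <= z3.
Proof.
  intros Hp1 Hp2 Hp3 Hn.
  pose proof (Hn p1 p2 0 (conj Hp1 (conj Hp2 (conj (Rle_refl 0) (th_nonneg p1 p2 Hp1 Hp2))))).
  nra.
Qed.

Lemma normal_cone_originE (z1 z2 z3 : R) :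
  normal_cone th 0 0 0 z1 z2 z3 <->
  (z1 <= 0 /\ z2 <= 0 /\ z3 <= 0) \/
  (z1 <= 0 /\ z2 <= 0 /\ 0 < z3 /\ superdiff th 0 0 (- (z1 / z3)) (- (z2 / z3))).
Proof.
  destruct (Rle_or_lt z3 0) as [Hz3|Hz3].
  - rewrite normal_cone_z3_nonposE, Rmult_0_r, quadrant_normal_coneE by lra.
    split; [intros (H1 & H2 & _); left; auto|].
    intros [(H1 & H2 & _) | (_ & _ & H & _)]; [repeat split; lra | lra].
  - assert (Hgraph : normal_cone th 0 0 0 z1 z2 z3 <-> normal_cone th 0 0 (th 0 0) z1 z2 z3)
      by (rewrite th_axis1 by lra; reflexivity).
    rewrite Hgraph, normal_cone_z3_posE by lra. split.
    + intros Hs. right.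
      destruct (superdiff_ge0 0 0 _ _ (Rle_refl 0) (Rle_refl 0) (th_axis1 0 (Rle_refl 0)) Hs).
      repeat split; [apply (opp_div_ge0_nonpos _ z3) .. | exact Hz3 | exact Hs]; assumption.
    + intros [(_ & _ & H) | (_ & _ & _ & Hs)]; [lra | exact Hs].
Qed.

Lemma normal_cone_axis1E (p1 z1 z2 z3 : R) : 0 < p1 ->
  normal_cone th p1 0 0 z1 z2 z3 <->
  (z1 = 0 /\ z2 <= 0 /\ z3 <= 0) \/
  (z1 = 0 /\ z2 <= 0 /\ 0 < z3 /\ superdiff th p1 0 0 (- z2 / z3)).
Proof.
  intros Hp1. destruct (Rle_or_lt z3 0) as [Hz3|Hz3].
  - rewrite normal_cone_z3_nonposE, Rmult_0_r, quadrant_normal_coneE by lra.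
    split.
    + intros (H1 & H2 & H3 & _). left. destruct (Rmult_integral _ _ H3); [auto | lra].
    + intros [(-> & H2 & _) | (_ & _ & H & _)]; [repeat split; lra | lra].
  - assert (Hgraph : normal_cone th p1 0 0 z1 z2 z3 <-> normal_cone th p1 0 (th p1 0) z1 z2 z3)
      by (rewrite th_axis1 by lra; reflexivity).
    rewrite Hgraph, normal_cone_z3_posE, Rdiv_opp_l by lra. split.
    + intros Hs. right.
      destruct (superdiff_axis1 _ _ _ Hp1 Hs) as [H1 H2].
      assert (Hz1 : z1 = 0).
      { replace z1 with (- (- (z1 / z3)) * z3) by (field; lra). rewrite H1. ring. }
      rewrite H1 in Hs.
      repeat split; [exact Hz1 | apply (opp_div_ge0_nonpos _ z3 Hz3 H2) | exact Hz3 | exact Hs].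
    + intros [(_ & _ & H) | (-> & _ & _ & Hs)]; [lra|].
      rewrite Rdiv_0_l, Ropp_0. exact Hs.
Qed.

Lemma superdiff_axis1_iff (p1 q : R) : 0 < p1 ->
  superdiff th p1 0 0 q <-> forall z, 0 <= z -> th p1 z <= q * z.
Proof.
  intros Hp1. rewrite superdiffE, th_axis1 by lra. split.
  - intros H z Hz. pose proof (H p1 z ltac:(lra) Hz). lra.
  - intros H y1 y2 Hy1 Hy2.
    assert (Hq : 0 <= q).
    { pose proof (H 1 Rle_0_1). pose proof (th_nonneg p1 1 ltac:(lra) Rle_0_1). lra. }
    enough (th y1 y2 <= q * y2) by lra.
    destruct (Req_dec y1 0) as [->|Hy1'].
    { rewrite th_axis2 by exact Hy2. nra. }
    set (l := y1 / p1).
    assert (Hl : 0 < l) by (apply Rdiv_lt_0_compat; lra).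
    assert (Hz : 0 <= y2 / l) by (apply Rdiv_le_0_compat; lra).
    replace (th y1 y2) with (th (l * p1) (l * (y2 / l))) by (f_equal; unfold l; field; lra).
    rewrite th_homogeneous by lra.
    pose proof (H _ Hz).
    replace (q * y2) with (l * (q * (y2 / l))) by (field; lra).
    apply Rmult_le_compat_l; lra.
Qed.

Lemma superdiff_axis1_sup (p1 q : R) : 0 < p1 ->
  superdiff th p1 0 0 q <-> Rbar_le (sup_pos (pd2 th p1)) q.
Proof.
  intros Hp1. rewrite superdiff_axis1_iff by exact Hp1.
  apply (concave_le_linear_iff (th p1)).
  - apply th_concave2; lra.
  - intros z Hz. apply th_derivable2; assumption.
  - apply th_axis1; lra.
  - apply th_right_cont2; lra.
Qed.

Lemma normal_cone_axis1_spec (p1 : R) : 0 < p1 ->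
  (forall z1 z2 z3, normal_cone th p1 0 0 z1 z2 z3 <->
     ((z1 = 0 /\ z2 <= 0 /\ z3 <= 0) \/
      (z1 = 0 /\ z2 <= 0 /\ 0 < z3 /\ superdiff th p1 0 0 (- z2 / z3)))) /\
  exists L : Rbar,
    filterlim (fun z => pd2 th p1 z) (at_right 0) (Rbar_locally L) /\
    (forall q, superdiff th p1 0 0 q <-> Rbar_le L (Finite q)) /\
    (L = p_infty -> forall r1 r2, ~ superdiff th p1 0 r1 r2).
Proof.
  intros Hp1. split; [intros; apply normal_cone_axis1E, Hp1|].
  exists (sup_pos (pd2 th p1)). repeat split.
  - apply (concave_Derive_lim_at_right0 (th p1)).
    + apply th_concave2; lra.
    + intros z Hz. apply th_derivable2; assumption.
  - intros Hs. apply superdiff_axis1_sup; assumption.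
  - intros Hs. apply superdiff_axis1_sup; assumption.
  - intros Hinf r1 r2 Hs.
    destruct (superdiff_axis1 _ _ _ Hp1 Hs) as [-> _].
    apply superdiff_axis1_sup in Hs; [|exact Hp1]. rewrite Hinf in Hs. exact Hs.
Qed.

End NormalCone.

Lemma normal_cone_swap (th : R -> R -> R) (p1 p2 p3 z1 z2 z3 : R) :
  normal_cone (fun s t => th t s) p2 p1 p3 z2 z1 z3 <-> normal_cone th p1 p2 p3 z1 z2 z3.
Proof.
  unfold normal_cone, Kset.
  split; intros H q1 q2 q3 (Hq1 & Hq2 & Hq3 & Hq); pose proof (H q2 q1 q3 ltac:(auto)); lra.
Qed.

Lemma superdiff_swap (th : R -> R -> R) (x1 x2 r1 r2 : R) :
  superdiff (fun s t => th t s) x2 x1 r2 r1 <-> superdiff th x1 x2 r1 r2.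
Proof.
  assert (Hext : forall y1 y2, theta_ext (fun s t => th t s) y2 y1 = theta_ext th y1 y2).
  { intros y1 y2. unfold theta_ext.
    destruct (Rle_dec 0 y1), (Rle_dec 0 y2); reflexivity. }
  unfold superdiff.
  split; intros H y1 y2; specialize (H y2 y1); rewrite !Hext in *;
    rewrite Rplus_comm; exact H.
Qed.

Section Theta.
Variable th : R -> R -> R.
Hypothesis Hth : theta_hyp th.

Lemma theta_nonneg (s t : R) : 0 <= s -> 0 <= t -> 0 <= th s t.
Proof. apply Hth. Qed.

Lemma theta_axis1 (s : R) : 0 <= s -> th s 0 = 0.
Proof. intros Hs. apply Hth, Hs. Qed.

Lemma theta_axis2 (t : R) : 0 <= t -> th 0 t = 0.
Proof. intros Ht. apply Hth, Ht. Qed.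

Lemma theta_homogeneous (l s t : R) : 0 <= l -> 0 <= s -> 0 <= t ->
  th (l * s) (l * t) = l * th s t.
Proof. apply Hth. Qed.

Lemma theta_pos (s t : R) : 0 < s -> 0 < t -> 0 < th s t.
Proof. apply Hth. Qed.

Lemma theta_concave1 (t : R) : 0 <= t -> concave_on_nonneg (fun s => th s t).
Proof.
  intros Ht x y l Hx Hy Hl. destruct Hth as (_ & _ & Hconc & _).
  pose proof (Hconc x t y t l Hx Ht Hy Ht Hl) as H.
  replace (l * t + (1 - l) * t) with t in H by ring. exact H.
Qed.

Lemma theta_concave2 (s : R) : 0 <= s -> concave_on_nonneg (th s).
Proof.
  intros Hs x y l Hx Hy Hl. destruct Hth as (_ & _ & Hconc & _).
  pose proof (Hconc s x s y l Hs Hx Hs Hy Hl) as H.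
  replace (l * s + (1 - l) * s) with s in H by ring. exact H.
Qed.

Lemma theta_derivable1 (s t : R) : 0 < s -> 0 < t -> ex_derive (fun u => th u t) s.
Proof. intros Hs Ht. destruct Hth as (_ & _ & _ & _ & _ & Hsm & _). apply (Hsm nil s t Hs Ht). Qed.

Lemma theta_derivable2 (s t : R) : 0 < s -> 0 < t -> ex_derive (th s) t.
Proof. intros Hs Ht. destruct Hth as (_ & _ & _ & _ & _ & Hsm & _). apply (Hsm nil s t Hs Ht). Qed.

Lemma theta_pd1_continuous2 (s t : R) : 0 < s -> 0 < t -> continuous (pd1 th s) t.
Proof.
  intros Hs Ht. destruct Hth as (_ & _ & _ & _ & _ & Hsm & _).
  destruct (Hsm (true :: nil) s t Hs Ht) as [Hc _].
  exact (continuous_comp_2 (fun _ => s) (fun u => u) (fun a b => pder (true :: nil) th a b) t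
           (continuous_const s t) (continuous_id t) Hc).
Qed.

Lemma theta_right_cont1 (t : R) : 0 <= t ->
  filterlim (fun z => th z t) (at_right 0) (locally 0).
Proof.
  intros Ht. destruct Hth as (Hcont & _).
  pose proof (Hcont 0 t (Rle_refl 0) Ht) as Hc. rewrite theta_axis2 in Hc by assumption.
  refine (filterlim_comp _ _ _ (fun z => (z, t)) (fun x => th (fst x) (snd x)) _ _ _ _ Hc).
  intros P [eps HP]. exists eps. intros z Hz Hz0.
  apply HP; [split; [exact Hz | apply ball_center] | split; simpl; lra].
Qed.

Lemma theta_right_cont2 (s : R) : 0 <= s -> filterlim (th s) (at_right 0) (locally 0).
Proof.
  intros Hs. destruct Hth as (Hcont & _).
  pose proof (Hcont s 0 Hs (Rle_refl 0)) as Hc. rewrite theta_axis1 in Hc by assumption.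
  refine (filterlim_comp _ _ _ (fun z => (s, z)) (fun x => th (fst x) (snd x)) _ _ _ _ Hc).
  intros P [eps HP]. exists eps. intros z Hz Hz0.
  apply HP; [split; [apply ball_center | exact Hz] | split; simpl; lra].
Qed.

Lemma theta_le_tangent_plane (p1 p2 q1 q2 : R) : 0 < p1 -> 0 < p2 -> 0 <= q1 -> 0 <= q2 ->
  th q1 q2 <= th p1 p2 + pd1 th p1 p2 * (q1 - p1) + pd2 th p1 p2 * (q2 - p2).
Proof.
  intros Hp1 Hp2 Hq1 Hq2.
  set (d1 := q1 - p1). set (d2 := q2 - p2).
  (* Only partial derivatives are available: split the step along the segment into a step
     in q2 at abscissa p1 and a step in q1 at ordinate p2 + t d2, then let t -> 0. *)
  assert (Hbound : forall t, 0 < t < 1 ->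
    th q1 q2 - th p1 p2 <= pd1 th p1 (p2 + t * d2) * d1 + pd2 th p1 p2 * d2).
  { intros t Ht.
    set (s := p2 + t * d2).
    assert (Hs : 0 < s) by (unfold s, d2; nra).
    destruct Hth as (_ & _ & Hconc & _).
    pose proof (Hconc q1 q2 p1 p2 t Hq1 Hq2 (Rlt_le _ _ Hp1) (Rlt_le _ _ Hp2) ltac:(lra)) as Hc.
    replace (t * q1 + (1 - t) * p1) with (p1 + t * d1) in Hc by (unfold d1; ring).
    replace (t * q2 + (1 - t) * p2) with s in Hc by (unfold s, d2; ring).
    pose proof (concave_le_tangent _ (theta_concave1 s (Rlt_le _ _ Hs)) p1 (p1 + t * d1)
                  Hp1 ltac:(unfold d1; nra) (theta_derivable1 p1 s Hp1 Hs)) as Hstep1.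
    pose proof (concave_le_tangent _ (theta_concave2 p1 (Rlt_le _ _ Hp1)) p2 s
                  Hp2 (Rlt_le _ _ Hs) (theta_derivable2 p1 p2 Hp1 Hp2)) as Hstep2.
    change (Derive (fun u => th u s) p1) with (pd1 th p1 s) in Hstep1.
    change (Derive (th p1) p2) with (pd2 th p1 p2) in Hstep2.
    replace (s - p2) with (t * d2) in Hstep2 by (unfold s; ring).
    apply (Rmult_le_reg_l t); [lra | nra]. }
  assert (Hlim : filterlim (fun t => pd1 th p1 (p2 + t * d2) * d1 + pd2 th p1 p2 * d2)
                   (at_right 0) (locally (pd1 th p1 (p2 + 0 * d2) * d1 + pd2 th p1 p2 * d2))).
  { apply (filterlim_filter_le_1 _ (filter_le_within _)).
    change (continuous (fun t => pd1 th p1 (p2 + t * d2) * d1 + pd2 th p1 p2 * d2) 0).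
    apply (continuous_plus (fun t => pd1 th p1 (p2 + t * d2) * d1) (fun _ => pd2 th p1 p2 * d2));
      [|apply continuous_const].
    apply (continuous_mult (fun t => pd1 th p1 (p2 + t * d2)) (fun _ => d1));
      [|apply continuous_const].
    apply (continuous_comp (fun t => p2 + t * d2) (pd1 th p1)).
    - apply continuity_pt_filterlim. reg.
    - apply theta_pd1_continuous2; [exact Hp1 | lra]. }
  pose proof (le_lim_at_right _ _ _ 1 Rlt_0_1 Hbound Hlim).
  replace (p2 + 0 * d2) with p2 in * by ring. lra.
Qed.

Lemma superdiff_interiorE (p1 p2 r1 r2 : R) : 0 < p1 -> 0 < p2 ->
  superdiff th p1 p2 r1 r2 <-> r1 = pd1 th p1 p2 /\ r2 = pd2 th p1 p2.
Proof.
  intros Hp1 Hp2. rewrite superdiffE by lra. split.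
  - intros H. split; symmetry.
    + apply (Derive_eq_of_le_affine _ p1 r1 p1 Hp1 (theta_derivable1 p1 p2 Hp1 Hp2)).
      intros x Hx. pose proof (H x p2 ltac:(lra) ltac:(lra)). lra.
    + apply (Derive_eq_of_le_affine _ p2 r2 p2 Hp2 (theta_derivable2 p1 p2 Hp1 Hp2)).
      intros x Hx. pose proof (H p1 x ltac:(lra) ltac:(lra)). lra.
  - intros [-> ->] y1 y2 Hy1 Hy2.
    pose proof (theta_le_tangent_plane p1 p2 y1 y2 Hp1 Hp2 Hy1 Hy2). lra.
Qed.

Lemma normal_cone_interiorE (p1 p2 p3 : R) : 0 <= p1 -> 0 <= p2 ->
  0 < p3 -> p3 < th p1 p2 -> forall z1 z2 z3,
  normal_cone th p1 p2 p3 z1 z2 z3 <-> (z1 = 0 /\ z2 = 0 /\ z3 = 0).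
Proof.
  intros Hp1 Hp2 Hp3 Hp3th z1 z2 z3.
  assert (Hp1' : 0 < p1).
  { destruct (Rle_lt_or_eq_dec 0 p1 Hp1) as [|<-]; [assumption|].
    rewrite theta_axis2 in Hp3th by exact Hp2. lra. }
  assert (Hp2' : 0 < p2).
  { destruct (Rle_lt_or_eq_dec 0 p2 Hp2) as [|<-]; [assumption|].
    rewrite theta_axis1 in Hp3th by exact Hp1. lra. }
  split.
  - intros Hn.
    pose proof (normal_cone_z3_le0 th theta_nonneg _ _ _ _ _ _ Hp1 Hp2 Hp3th Hn).
    pose proof (normal_cone_z3_ge0 th theta_nonneg _ _ _ _ _ _ Hp1 Hp2 Hp3 Hn).
    assert (Hz3 : z3 = 0) by lra. subst z3.
    rewrite (normal_cone_z3_nonposE th theta_nonneg), Rmult_0_l, quadrant_normal_coneE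
      in Hn by lra.
    destruct Hn as (_ & _ & H1 & H2). repeat split; nra.
  - intros (-> & -> & ->) q1 q2 q3 _. lra.
Qed.

Lemma normal_cone_bottomE (p1 p2 : R) : 0 < p1 -> 0 < p2 -> forall z1 z2 z3,
  normal_cone th p1 p2 0 z1 z2 z3 <-> (z1 = 0 /\ z2 = 0 /\ z3 <= 0).
Proof.
  intros Hp1 Hp2 z1 z2 z3. split.
  - intros Hn.
    pose proof (normal_cone_z3_le0 th theta_nonneg _ _ _ _ _ _
                  (Rlt_le _ _ Hp1) (Rlt_le _ _ Hp2) (theta_pos p1 p2 Hp1 Hp2) Hn) as Hz3.
    rewrite (normal_cone_z3_nonposE th theta_nonneg), Rmult_0_r, quadrant_normal_coneE
      in Hn by lra.
    destruct Hn as (_ & _ & H1 & H2). repeat split; nra.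
  - intros (-> & -> & Hz3) q1 q2 q3 (_ & _ & Hq3 & _). nra.
Qed.

Lemma normal_cone_topE (p1 p2 : R) : 0 < p1 -> 0 < p2 -> forall z1 z2 z3,
  normal_cone th p1 p2 (th p1 p2) z1 z2 z3 <->
  exists l, 0 <= l /\ z1 = l * (- pd1 th p1 p2) /\ z2 = l * (- pd2 th p1 p2) /\ z3 = l.
Proof.
  intros Hp1 Hp2 z1 z2 z3. split.
  - intros Hn. exists z3.
    pose proof (normal_cone_z3_ge0 th theta_nonneg _ _ _ _ _ _
                  (Rlt_le _ _ Hp1) (Rlt_le _ _ Hp2) (theta_pos p1 p2 Hp1 Hp2) Hn) as Hz3.
    destruct (Rle_lt_or_eq_dec 0 z3 Hz3) as [Hz3' | <-].
    + rewrite (normal_cone_z3_posE th theta_nonneg), superdiff_interiorE in Hn by lra.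
      destruct Hn as [<- <-]. repeat split; [lra | field; lra | field; lra].
    + rewrite (normal_cone_z3_nonposE th theta_nonneg), Rmult_0_l, quadrant_normal_coneE
        in Hn by lra.
      destruct Hn as (_ & _ & H1 & H2). repeat split; nra.
  - intros (l & Hl & -> & -> & ->).
    destruct (Rle_lt_or_eq_dec 0 l Hl) as [Hl' | <-].
    + rewrite (normal_cone_z3_posE th theta_nonneg), superdiff_interiorE by lra.
      split; field; lra.
    + intros q1 q2 q3 _. lra.
Qed.

Lemma normal_cone_axis2_spec (p2 : R) : 0 < p2 ->
  (forall z1 z2 z3, normal_cone th 0 p2 0 z1 z2 z3 <->
     ((z2 = 0 /\ z1 <= 0 /\ z3 <= 0) \/
      (z2 = 0 /\ z1 <= 0 /\ 0 < z3 /\ superdiff th 0 p2 (- z1 / z3) 0))) /\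
  exists L : Rbar,
    filterlim (fun z => pd1 th z p2) (at_right 0) (Rbar_locally L) /\
    (forall q, superdiff th 0 p2 q 0 <-> Rbar_le L (Finite q)) /\
    (L = p_infty -> forall r1 r2, ~ superdiff th 0 p2 r1 r2).
Proof.
  intros Hp2.
  destruct (normal_cone_axis1_spec (fun s t => th t s)
              (fun s t Hs Ht => theta_nonneg t s Ht Hs) theta_axis2 theta_axis1
              (fun l s t Hl Hs Ht => theta_homogeneous l t s Hl Ht Hs)
              theta_concave1 (fun s t Hs Ht => theta_derivable1 t s Ht Hs)
              theta_right_cont1 p2 Hp2) as [Hcone [L (HL & Hsup & Hempty)]].
  split.
  - intros z1 z2 z3. rewrite <- normal_cone_swap, Hcone, superdiff_swap. reflexivity.
  - exists L. repeat split; [exact HL | ..].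
    + intros Hs. apply Hsup, superdiff_swap, Hs.
    + intros HLq. apply superdiff_swap, Hsup, HLq.
    + intros Hinf r1 r2 Hs. apply (Hempty Hinf r2 r1), superdiff_swap, Hs.
Qed.

End Theta.

Theorem lemma4p4 (th : R -> R -> R) (Hth : theta_hyp th) :
  (* (i) *)
  (forall p1 p2 p3, 0 <= p1 -> 0 <= p2 -> 0 < p3 -> p3 < th p1 p2 ->
     forall z1 z2 z3, normal_cone th p1 p2 p3 z1 z2 z3 <->
       (z1 = 0 /\ z2 = 0 /\ z3 = 0)) /\
  (* (ii) *)
  (forall p1 p2, 0 < p1 -> 0 < p2 ->
     forall z1 z2 z3, normal_cone th p1 p2 0 z1 z2 z3 <->
       (z1 = 0 /\ z2 = 0 /\ z3 <= 0)) /\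
  (* (iii), point (p1,0,0) *)
  (forall p1, 0 < p1 ->
     (forall z1 z2 z3, normal_cone th p1 0 0 z1 z2 z3 <->
        ((z1 = 0 /\ z2 <= 0 /\ z3 <= 0) \/
         (z1 = 0 /\ z2 <= 0 /\ 0 < z3 /\ superdiff th p1 0 0 (- z2 / z3)))) /\
     exists L : Rbar,
       filterlim (fun z => pd2 th p1 z) (at_right 0) (Rbar_locally L) /\
       (forall q, superdiff th p1 0 0 q <-> Rbar_le L (Finite q)) /\
       (L = p_infty -> forall r1 r2, ~ superdiff th p1 0 r1 r2)) /\
  (* (iii), analogous point (0,p2,0) *)
  (forall p2, 0 < p2 ->
     (forall z1 z2 z3, normal_cone th 0 p2 0 z1 z2 z3 <->
        ((z2 = 0 /\ z1 <= 0 /\ z3 <= 0) \/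
         (z2 = 0 /\ z1 <= 0 /\ 0 < z3 /\ superdiff th 0 p2 (- z1 / z3) 0))) /\
     exists L : Rbar,
       filterlim (fun z => pd1 th z p2) (at_right 0) (Rbar_locally L) /\
       (forall q, superdiff th 0 p2 q 0 <-> Rbar_le L (Finite q)) /\
       (L = p_infty -> forall r1 r2, ~ superdiff th 0 p2 r1 r2)) /\
  (* (iv) *)
  (forall z1 z2 z3, normal_cone th 0 0 0 z1 z2 z3 <->
     ((z1 <= 0 /\ z2 <= 0 /\ z3 <= 0) \/
      (z1 <= 0 /\ z2 <= 0 /\ 0 < z3 /\
       superdiff th 0 0 (- (z1 / z3)) (- (z2 / z3))))) /\
  (* (v) *)
  (forall p1 p2, 0 < p1 -> 0 < p2 ->
     forall z1 z2 z3, normal_cone th p1 p2 (th p1 p2) z1 z2 z3 <->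
       exists l, 0 <= l /\
         z1 = l * (- pd1 th p1 p2) /\ z2 = l * (- pd2 th p1 p2) /\ z3 = l).
Proof.
  split; [exact (normal_cone_interiorE th Hth) |].
  split; [exact (normal_cone_bottomE th Hth) |].
  split.
  { exact (normal_cone_axis1_spec th (theta_nonneg th Hth) (theta_axis1 th Hth)
             (theta_axis2 th Hth) (theta_homogeneous th Hth) (theta_concave2 th Hth)
             (theta_derivable2 th Hth) (theta_right_cont2 th Hth)). }
  split; [exact (normal_cone_axis2_spec th Hth) |].
  split; [exact (normal_cone_originE th (theta_nonneg th Hth) (theta_axis1 th Hth)) |].
  exact (normal_cone_topE th Hth).
Qed.
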